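(* Let $G$ be obtained from a graph $H_0$ by subdividing every edge exactly once. Then $\chi_\ell^{\bullet}(G)\le\chi_c^{\bullet}(G)\leq 3$, $\chi_c^{\star}(G)\leq 4$ and $\chi_\ell^{\star}(G)\leq 3$. All of these bounds are attained (by even cycles).
   Context: All graphs are finite and simple. A correspondence-cover of a graph $G$ is a pair $(L,H)$ where $H$ is a graph and $L$ maps each $v\in V(G)$ to a subset $L(v)\subseteq V(H)$ such that: the sets $L(v)$ partition $V(H)$; each $L(v)$ induces a clique in $H$; if $uv\notin E(G)$ there are no edges of $H$ between $L(u)$ and $L(v)$; if $uv\in E(G)$ the edges of $H$ between $L(u)$ and $L(v)$ form a matching. It is $k$-fold if all $|L(v)|=k$. A list-cover is the cover arising from a list-assignment $v\mapsto L(v)\subseteq\mathbb{N}$: vertices $(v,x)$, $x\in L(v)$, cliques on lists, edges $(u,x)(v,x)$ for $uv\in E(G)$. An independent transversal is an independent set of $H$ with exactly one vertex in each $L(v)$. A $k$-fold cover has a packing if it has $k$ pairwise disjoint independent transversals, and a fractional packing if there is a probability distribution on independent transversals $I$ with $\Pr(x\in I)=1/|L(v)|$ for all $v$, $x\in L(v)$. $\chi_c^\star(G)$ (resp. $\chi_c^\bullet(G)$) is the least $k$ such that every $k$-fold correspondence-cover has a packing (resp. fractional packing); $\chi_\ell^\star(G)$, $\chi_\ell^\bullet(G)$ are defined the same way using only $k$-fold list-covers. *)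

From HB Require Import structures.
From mathcomp Require Import all_boot all_order all_algebra.
From mathcomp Require Import Rstruct.
Set Implicit Arguments. Unset Strict Implicit. Unset Printing Implicit Defensive.
Import Order.TTheory GRing.Theory Num.Theory.

Definition simple_graph (V : finType) (g : rel V) : Prop :=
  symmetric g /\ irreflexive g.

(* (L, H) with H = (C, h) a graph on the finite type C. *)
Definition is_cover (V : finType) (g : rel V) (C : finType) (h : rel C)
    (L : V -> {set C}) : Prop :=
  [/\ simple_graph h,
      (forall c : C, #|[set v | c \in L v]| = 1%N),
      (forall v x y, x \in L v -> y \in L v -> x != y -> h x y),
      (forall u v x y, u != v -> ~~ g u v -> x \in L u -> y \in L v -> ~~ h x y)
    &
      (forall u v x y1 y2, g u v -> x \in L u -> y1 \in L v -> y2 \in L v ->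
          h x y1 -> h x y2 -> y1 = y2)].

Definition k_fold (V : finType) (C : finType) (L : V -> {set C}) (k : nat) : Prop :=
  forall v, #|L v| = k.

Definition indep_transversal (V : finType) (C : finType) (h : rel C)
    (L : V -> {set C}) (I : {set C}) : bool :=
  [forall x in I, forall y in I, ~~ h x y] && [forall v, #|I :&: L v| == 1%N].

Definition has_packing (V : finType) (C : finType) (h : rel C)
    (L : V -> {set C}) (k : nat) : Prop :=
  exists T : 'I_k -> {set C},
    (forall i, indep_transversal h L (T i)) /\
    (forall i j, i != j -> [disjoint T i & T j]).

Local Open Scope ring_scope.
Definition has_fractional_packing (V : finType) (C : finType) (h : rel C)
    (L : V -> {set C}) : Prop :=
  exists p : {set C} -> Rdefinitions.R,
    [/\ (forall I, 0 <= p I),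
        (forall I, ~~ indep_transversal h L I -> p I = 0),
        (\sum_(I : {set C}) p I = 1)
      & (forall v x, x \in L v ->
           \sum_(I : {set C} | x \in I) p I = (#|L v|%:R)^-1)].

Local Close Scope ring_scope.
(* A list assignment with values in 'I_N (any finite lists of naturals fit
   in some 'I_N).  The cover graph has vertices (v, x), x in Lst v. *)
Definition lc_vert (V : finType) (N : nat) (Lst : V -> {set 'I_N}) :=
  {p : V * 'I_N | p.2 \in Lst p.1}.

Definition lc_rel (V : finType) (g : rel V) (N : nat) (Lst : V -> {set 'I_N})
  : rel (lc_vert Lst) :=
  fun a b => (val a != val b) &&
    (((val a).1 == (val b).1) ||
     (g (val a).1 (val b).1 && ((val a).2 == (val b).2))).

Definition lc_L (V : finType) (N : nat) (Lst : V -> {set 'I_N})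
  : V -> {set lc_vert Lst} :=
  fun v => [set c | (val c).1 == v].
Arguments lc_rel {V} g {N} Lst.
Arguments lc_L {V N} Lst.

Definition corr_packing_prop (V : finType) (g : rel V) (k : nat) : Prop :=
  forall (C : finType) (h : rel C) (L : V -> {set C}),
    is_cover g h L -> k_fold L k -> has_packing h L k.

Definition corr_frac_prop (V : finType) (g : rel V) (k : nat) : Prop :=
  forall (C : finType) (h : rel C) (L : V -> {set C}),
    is_cover g h L -> k_fold L k -> has_fractional_packing h L.

Definition list_packing_prop (V : finType) (g : rel V) (k : nat) : Prop :=
  forall (N : nat) (Lst : V -> {set 'I_N}), (forall v, #|Lst v| = k) ->
    has_packing (lc_rel g Lst) (lc_L Lst) k.

Definition list_frac_prop (V : finType) (g : rel V) (k : nat) : Prop :=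
  forall (N : nat) (Lst : V -> {set 'I_N}), (forall v, #|Lst v| = k) ->
    has_fractional_packing (lc_rel g Lst) (lc_L Lst).

(* For a parameter chi := least k >= 1 with P k:
   chi_le P n  <->  chi <= n,
   chi_eq P n  <->  chi = n,
   chi_leq P Q <->  chi(P) <= chi(Q)  (whenever chi(Q) exists). *)
Definition chi_le (P : nat -> Prop) (n : nat) : Prop :=
  exists k, [/\ 0 < k, k <= n & P k]%N.

Definition chi_eq (P : nat -> Prop) (n : nat) : Prop :=
  chi_le P n /\ ~ chi_le P n.-1.

Definition chi_leq (P Q : nat -> Prop) : Prop :=
  forall k, (0 < k)%N -> Q k -> chi_le P k.

Definition subdiv_edge (V0 : finType) (e0 : rel V0) :=
  {S : {set V0} | [exists u, exists v, e0 u v && (S == [set u; v])]}.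

Definition subdiv_vert (V0 : finType) (e0 : rel V0) : finType :=
  (V0 + subdiv_edge e0)%type.

Definition subdiv_rel (V0 : finType) (e0 : rel V0) : rel (subdiv_vert e0) :=
  fun a b => match a, b with
             | inl x, inr s => x \in val s
             | inr s, inl x => x \in val s
             | _, _ => false
             end.

Definition cycle_rel (n : nat) : rel 'I_n :=
  fun i j => (j == (i.+1 %% n) :> nat) || (i == (j.+1 %% n) :> nat).
Arguments subdiv_rel {V0} e0.
Arguments subdiv_vert {V0} e0.
Arguments cycle_rel n : clear implicits.

From mathcomp Require Import all_boot all_order all_algebra all_fingroup.
From mathcomp Require Import Rstruct ring.
Set Implicit Arguments. Unset Strict Implicit. Unset Printing Implicit Defensive.
Import Order.TTheory GRing.Theory Num.Theory.

(* Subdividing every edge leaves each new vertex with two neighbours, both of them old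
   vertices.  Colour the old vertices first: a new vertex then only has to avoid the (at
   most two) colours matched to the colours of its ends.  For a packing, order each old
   list arbitrarily and give every new vertex a permutation of its list avoiding the two
   partial matchings with its ends; such a permutation exists for lists of size 4, and
   for lists of size 3 when both matchings are monotone, as they are for lists of integers
   ordered increasingly (two finite checks).  For a fractional packing with lists of size
   3, colour the old vertices independently and uniformly, and each new vertex uniformly
   among the colours not matched to its ends' colours; once the matchings are extended to
   bijections, every colour of every vertex has probability 1/3.
   The subdivided triangle, a 6-cycle, shows that the bounds are attained: suitable
   2-lists force the colour of a vertex around the cycle, and the 3-fold cover with a
   single twisted edge has no packing, because the colour permutations of a packing on
   adjacent vertices differ by derangements of three colours, which are even. *)

(** * Covers and list covers *)

Section Cover.
Variables (V : finType) (g : rel V) (C : finType) (h : rel C) (L : V -> {set C}).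
Hypothesis coverL : is_cover g h L.

Lemma cover_owner_uniq x v w : x \in L v -> x \in L w -> v = w.
Proof.
case: coverL => _ partL _ _ _ xv xw.
have /eqP/cards1P [u owner] := partL x.
have : v \in [set v | x \in L v] by rewrite inE.
have : w \in [set v | x \in L v] by rewrite inE.
by rewrite owner !inE => /eqP -> /eqP ->.
Qed.

Lemma cover_irr x : ~~ h x x.
Proof. by case: coverL => [[_ ->]]. Qed.

Lemma cover_sym x y : h x y = h y x.
Proof. by case: coverL => [[-> _]]. Qed.

Lemma indep_transversal_imset (phi : V -> C) :
  (forall v, phi v \in L v) -> (forall v w, g v w -> ~~ h (phi v) (phi w)) ->
  indep_transversal h L [set phi v | v : V].
Proof.
move=> phiL phi_indep; apply/andP; split.
  apply/forallP => x; apply/implyP => /imsetP [v _ ->].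
  apply/forallP => y; apply/implyP => /imsetP [w _ ->].
  have [<-|nvw] := eqVneq v w; first exact: cover_irr.
  case gvw: (g v w); first exact: phi_indep.
  by case: coverL => _ _ _ nonadj _; apply: nonadj (phiL v) (phiL w) => //; rewrite gvw.
apply/forallP => v; apply/cards1P; exists (phi v); apply/setP => y.
rewrite !inE; apply/andP/eqP => [[/imsetP [w _ ->] wv]|->].
  by rewrite (cover_owner_uniq wv (phiL w)).
by split; [apply: imset_f | apply: phiL].
Qed.

Lemma has_packing_of_choices k (phi : 'I_k -> V -> C) :
  (forall i v, phi i v \in L v) ->
  (forall i v w, g v w -> ~~ h (phi i v) (phi i w)) ->
  (forall i j v, phi i v = phi j v -> i = j) ->
  has_packing h L k.
Proof.
move=> phiL phi_indep phi_inj; exists (fun i => [set phi i v | v : V]); split.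
  by move=> i; apply: indep_transversal_imset (phiL i) (phi_indep i).
move=> i j nij; rewrite -setI_eq0; apply/eqP/setP => x; rewrite !inE.
apply/negP => /andP [/imsetP [v _ ->] /imsetP [w _ ivw]].
have vw : v = w by apply: cover_owner_uniq (phiL i v) _; rewrite ivw.
by subst w; rewrite (phi_inj _ _ _ ivw) eqxx in nij.
Qed.

Lemma indep_transversal_meet1 I v :
  indep_transversal h L I -> exists x, I :&: L v = [set x].
Proof. by case/andP => _ /forallP /(_ v) /cards1P. Qed.

Lemma packing_covers k (T : 'I_k -> {set C}) v x :
  #|L v| = k -> (forall i, indep_transversal h L (T i)) ->
  (forall i j, i != j -> [disjoint T i & T j]) -> x \in L v ->
  exists i, x \in T i.
Proof.
move=> Lk Tindep Tdisj xL.
have [f Tf] := fin_all_exists (fun i => indep_transversal_meet1 v (Tindep i)).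
have fTL i : f i \in T i :&: L v by rewrite Tf set11.
have f_inj : injective f.
  move=> i j fij; apply/eqP; apply: contraT => nij.
  have := fTL j; rewrite -fij !inE => /andP [fj _].
  by move: (fTL i); rewrite inE (disjointFl (Tdisj _ _ nij) fj).
have imf : [set f i | i in 'I_k] = L v.
  apply/eqP; rewrite eqEcard card_imset // card_ord Lk leqnn andbT.
  by apply/subsetP => _ /imsetP [i _ ->]; move: (fTL i); rewrite inE => /andP [].
move: xL; rewrite -imf => /imsetP [i _ ->]; exists i.
by move: (fTL i); rewrite inE => /andP [].
Qed.

Lemma not_packing_of_avoided k v x :
  k_fold L k -> x \in L v ->
  (forall I, indep_transversal h L I -> x \notin I) -> ~ has_packing h L k.
Proof.
move=> Lk xL avoided [T [Tindep Tdisj]].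
have [i xT] := packing_covers (Lk v) Tindep Tdisj xL.
by move: (avoided _ (Tindep i)); rewrite xT.
Qed.

Local Open Scope ring_scope.

Lemma not_fractional_packing_of_avoided v x :
  x \in L v ->
  (forall I, indep_transversal h L I -> x \notin I) -> ~ has_fractional_packing h L.
Proof.
move=> xL avoided [p [_ p0 _ marg]].
have Lv_gt0 : (0 < #|L v|)%N by apply/card_gt0P; exists x.
have : \sum_(I : {set C} | x \in I) p I = 0.
  by apply: big1 => I xI; apply: p0; apply: contraL xI; apply: avoided.
by rewrite (marg v x xL) => /eqP; rewrite invr_eq0 pnatr_eq0 eqn0Ngt Lv_gt0.
Qed.

End Cover.

Section ListCover.
Variables (V : finType) (g : rel V) (N : nat) (Lst : V -> {set 'I_N}).

Lemma lc_vert_eq (c1 c2 : lc_vert Lst) :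
  (val c1).1 = (val c2).1 -> (val c1).2 = (val c2).2 -> c1 = c2.
Proof. by move=> e1 e2; apply/val_inj/injective_projections. Qed.

Lemma lc_cover : simple_graph g -> is_cover g (lc_rel g Lst) (lc_L Lst).
Proof.
case=> g_sym g_irr; split.
- split=> [a b|a]; last by rewrite /lc_rel eqxx.
  by rewrite /lc_rel eq_sym (eq_sym (val a).1) (eq_sym (val a).2) g_sym.
- move=> c; apply/eqP/cards1P; exists (val c).1; apply/setP => v.
  by rewrite !inE eq_sym.
- move=> v x y; rewrite !inE /lc_rel => /eqP -> /eqP -> nxy.
  by rewrite eqxx orTb andbT; apply: contra nxy => /eqP /val_inj ->.
- move=> u v x y nuv nguv; rewrite !inE /lc_rel => /eqP -> /eqP ->.
  by rewrite (negbTE nuv) (negbTE nguv) andbF.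
- move=> u v x y1 y2 guv; rewrite !inE /lc_rel => /eqP xu /eqP y1v /eqP y2v.
  rewrite xu y1v y2v.
  have nuv : (u == v) = false by apply: contraTF guv => /eqP ->; rewrite g_irr.
  rewrite nuv guv /= => /andP [_ /eqP x1] /andP [_ /eqP x2].
  by apply: lc_vert_eq; rewrite ?y1v ?y2v // -x1 -x2.
Qed.

Lemma lc_k_fold k : (forall v, #|Lst v| = k) -> k_fold (lc_L Lst) k.
Proof.
move=> Lk v; rewrite -(Lk v).
have -> : Lst v = [set (val c).2 | c in lc_L Lst v].
  apply/setP => x; apply/idP/imsetP => [xL|[c]]; last first.
    by rewrite inE => /eqP cv ->; have := valP c; rewrite cv.
  by exists (Sub (v, x) xL); rewrite ?inE SubK.
rewrite card_in_imset // => c1 c2; rewrite !inE => /eqP e1 /eqP e2 /lc_vert_eq.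
by apply; rewrite e1 e2.
Qed.

End ListCover.

Lemma list_packing_of_corr_packing (V : finType) (g : rel V) k :
  simple_graph g -> corr_packing_prop g k -> list_packing_prop g k.
Proof. by move=> g_simple corr_k N Lst Lk; apply: corr_k; [apply: lc_cover | apply: lc_k_fold]. Qed.

Lemma list_frac_of_corr_frac (V : finType) (g : rel V) k :
  simple_graph g -> corr_frac_prop g k -> list_frac_prop g k.
Proof. by move=> g_simple corr_k N Lst Lk; apply: corr_k; [apply: lc_cover | apply: lc_k_fold]. Qed.

Lemma chi_leq_list_corr_frac (V : finType) (g : rel V) :
  simple_graph g -> chi_leq (list_frac_prop g) (corr_frac_prop g).
Proof. by move=> g_simple k k_gt0 corr_k; exists k; split=> //; apply: list_frac_of_corr_frac. Qed.

(** * Permutations avoiding partial matchings *)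

Definition partial_injective (T : Type) (b : T -> option T) :=
  forall i j x, b i = Some x -> b j = Some x -> i = j.

Lemma partial_injective_extend (T : finType) (b : T -> option T) :
  partial_injective b ->
  exists sg : T -> T, injective sg /\ forall i x, b i = Some x -> sg i = x.
Proof.
move=> b_inj.
pose D := [set i | b i == None]; pose R := [set x | [forall i, b i != Some x]].
have cardDR : #|D| = #|R|.
  have imD : [set odflt i (b i) | i in ~: D] = ~: R.
    apply/setP => x; rewrite !inE negb_forall; apply/imsetP/existsP.
      case=> i; rewrite !inE => iD ->; case bi: (b i) iD => [y|] // _.
      by exists i; rewrite bi /= eqxx.
    by case=> i /negPn /eqP bi; exists i; rewrite ?inE bi.
  have card_imD : #|[set odflt i (b i) | i in ~: D]| = #|~: D|.
    apply: card_in_imset => i j; rewrite !inE; case bi: (b i) => [x|] // _.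
    by case bj: (b j) => [y|] // _ /= xy; apply: b_inj bi _; rewrite bj xy.
  by apply/eqP; rewrite -(eqn_add2r #|~: D|) cardsC -card_imD imD cardsC.
have idxR i : i \in D -> index i (enum D) < size (enum R).
  by move=> iD; rewrite -!cardE -cardDR cardE index_mem mem_enum.
have enumR i : i \in D -> nth i (enum R) (index i (enum D)) \in R.
  by move=> iD; rewrite -mem_enum mem_nth ?idxR.
exists (fun i => if b i is Some x then x else nth i (enum R) (index i (enum D))).
split=> [i j|i x -> //].
case bi: (b i) => [x|]; case bj: (b j) => [y|].
- by move=> xy; apply: b_inj bi _; rewrite bj xy.
- move=> xR; have := enumR j; rewrite inE bj eqxx -xR inE => /(_ isT) /forallP /(_ i).
  by rewrite bi eqxx.
- move=> yR; have := enumR i; rewrite inE bi eqxx yR inE => /(_ isT) /forallP /(_ j).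
  by rewrite bj eqxx.
have iD : i \in D by rewrite inE bi.
have jD : j \in D by rewrite inE bj.
move/eqP; rewrite (set_nth_default j) ?idxR // nth_uniq ?enum_uniq ?idxR // => /eqP ij.
by rewrite -[i](@nth_index _ i _ (enum D)) ?mem_enum // ij nth_index ?mem_enum.
Qed.

Definition has_avoiding_perm n (b1 b2 : 'I_n -> option 'I_n) :=
  exists sg : 'I_n -> 'I_n, injective sg /\ forall i, b1 i != Some (sg i) /\ b2 i != Some (sg i).

Definition monotone_partial n (b : 'I_n -> option 'I_n) :=
  forall (i j : 'I_n) x y, i < j -> b i = Some x -> b j = Some y -> x < y.

(* Partial maps ['I_n -> option 'I_n] are encoded as sequences over [0..n],
   with [n] standing for [None], so that the finite checks run under [vm_compute]. *)
Fixpoint tuples_below (n m : nat) : seq (seq nat) :=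
  if n is n'.+1 then [seq x :: s | x <- iota 0 m, s <- tuples_below n' m] else [:: [::]].

Definition perm_seqs n := filter uniq (tuples_below n n).

Definition code n (o : option 'I_n) := if o is Some x then val x else n.

Definition encode n (b : 'I_n -> option 'I_n) := map (fun i => code (b i)) (enum 'I_n).

Definition pinj_seq n (xs : seq nat) :=
  all (fun i => all (fun j =>
    (i == j) || (n <= nth 0 xs i) || (nth 0 xs i != nth 0 xs j)) (iota 0 n)) (iota 0 n).

Definition mono_seq n (xs : seq nat) :=
  all (fun i => all (fun j =>
    (j <= i) || (n <= nth 0 xs i) || (n <= nth 0 xs j) || (nth 0 xs i < nth 0 xs j))
    (iota 0 n)) (iota 0 n).

Definition avoids_seq n (s xs ys : seq nat) :=
  all (fun i => (nth 0 s i != nth 0 xs i) && (nth 0 s i != nth 0 ys i)) (iota 0 n).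

Definition avoidable n (ok : pred (seq nat)) :=
  let cs := filter ok (tuples_below n n.+1) in let ps := perm_seqs n in
  all (fun xs => all (fun ys => has (fun s => avoids_seq n s xs ys) ps) cs) cs.

Lemma all_iota_ord n (P : pred nat) : all P (iota 0 n) = [forall i : 'I_n, P i].
Proof.
apply/allP/forallP => [P_all i|P_all i]; first by apply: P_all; rewrite mem_iota ltn_ord.
by rewrite mem_iota add0n => lt_in; apply: (P_all (Ordinal lt_in)).
Qed.

Lemma mem_tuples_below n m s :
  (s \in tuples_below n m) = (size s == n) && all (fun x => x < m) s.
Proof.
elim: n s => [|n IHn] [|x s] //=; first by apply/negP => /allpairsPdep [? [? [_ _ ]]].
apply/allpairsPdep/idP => [[y [t [+ + [-> ->]]]]|/andP [/eqP [sz] /andP [xm sm]]].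
  by rewrite mem_iota IHn eqSS => ym /andP [-> ->]; rewrite andbT.
by exists x, s; rewrite mem_iota IHn sz eqxx sm.
Qed.

Lemma nth_encode n (b : 'I_n -> option 'I_n) (i : 'I_n) : nth 0 (encode b) i = code (b i).
Proof. by rewrite (nth_map i) ?size_enum_ord // nth_ord_enum. Qed.

Lemma code_inj n : injective (@code n).
Proof.
case=> [x|] [y|] //= => [/val_inj -> // | xn | yn].
  by move: (ltn_ord x); rewrite xn ltnn.
by move: (ltn_ord y); rewrite -yn ltnn.
Qed.

Lemma encode_mem n (b : 'I_n -> option 'I_n) : encode b \in tuples_below n n.+1.
Proof.
rewrite mem_tuples_below size_map size_enum_ord eqxx; apply/allP => _ /mapP [i _ ->].
by case: (b i) => [x|] /=; rewrite ltnS // ltnW.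
Qed.

Lemma pinj_seq_encode n (b : 'I_n -> option 'I_n) :
  partial_injective b -> pinj_seq n (encode b).
Proof.
move=> b_inj; rewrite /pinj_seq all_iota_ord; apply/forallP => i.
rewrite all_iota_ord; apply/forallP => j; rewrite !nth_encode.
case: eqVneq => //= nij; case bi: (b i) => [x|] /=; last by rewrite leqnn.
rewrite leqNgt ltn_ord /=; apply: contra_neq nij => xbj.
suff /(b_inj i j x bi) -> : b j = Some x by [].
by apply/esym/(@code_inj n).
Qed.

Lemma mono_seq_encode n (b : 'I_n -> option 'I_n) :
  monotone_partial b -> mono_seq n (encode b).
Proof.
move=> b_mono; rewrite /mono_seq all_iota_ord; apply/forallP => i.
rewrite all_iota_ord; apply/forallP => j; rewrite !nth_encode.
case: (leqP j i) => //= lt_ij.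
case bi: (b i) => [x|] /=; last by rewrite leqnn.
case bj: (b j) => [y|] /=; last by rewrite leqnn !orbT.
by rewrite (b_mono i j x y) ?orbT.
Qed.

Lemma perm_seq_fun n s : s \in perm_seqs n ->
  exists sg : 'I_n -> 'I_n, injective sg /\ forall i, val (sg i) = nth 0 s i.
Proof.
rewrite mem_filter mem_tuples_below => /and3P [s_uniq /eqP s_size s_lt].
have nth_lt (i : 'I_n) : nth 0 s i < n by apply: (allP s_lt); rewrite mem_nth ?s_size.
exists (fun i : 'I_n => insubd i (nth 0 s i)); split=> [i j|i]; last by rewrite val_insubd nth_lt.
move/(congr1 val); rewrite !val_insubd !nth_lt => /eqP.
by rewrite nth_uniq ?s_size // => /eqP/val_inj.
Qed.

Lemma avoidable_sound n (ok : pred (seq nat)) (b1 b2 : 'I_n -> option 'I_n) :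
  avoidable n ok -> ok (encode b1) -> ok (encode b2) -> has_avoiding_perm b1 b2.
Proof.
move=> /allP check ok1 ok2.
have enc_ok (b : 'I_n -> option 'I_n) :
    ok (encode b) -> encode b \in filter ok (tuples_below n n.+1).
  by move=> okb; rewrite mem_filter okb encode_mem.
have /hasP [s s_perm] := allP (check _ (enc_ok _ ok1)) _ (enc_ok _ ok2).
rewrite /avoids_seq all_iota_ord => /forallP avoid.
have [sg [sg_inj sg_val]] := perm_seq_fun s_perm.
exists sg; split=> // i; have /andP := avoid i; rewrite !nth_encode -sg_val.
by case=> b1i b2i; split; [move: b1i | move: b2i]; apply: contra_neq => ->.
Qed.

Lemma avoidable4_pinj : avoidable 4 (pinj_seq 4).
Proof. by vm_compute. Qed.

Lemma avoidable3_mono : avoidable 3 (mono_seq 3).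
Proof. by vm_compute. Qed.

Lemma partial_injective_avoidable4 (b1 b2 : 'I_4 -> option 'I_4) :
  partial_injective b1 -> partial_injective b2 -> has_avoiding_perm b1 b2.
Proof.
by move=> /pinj_seq_encode b1P /pinj_seq_encode; apply: avoidable_sound avoidable4_pinj b1P.
Qed.

Lemma monotone_avoidable3 (b1 b2 : 'I_3 -> option 'I_3) :
  monotone_partial b1 -> monotone_partial b2 -> has_avoiding_perm b1 b2.
Proof.
by move=> /mono_seq_encode b1P /mono_seq_encode; apply: avoidable_sound avoidable3_mono b1P.
Qed.

Definition o0 : 'I_3 := @Ordinal 3 0 isT.
Definition o1 : 'I_3 := @Ordinal 3 1 isT.
Definition o2 : 'I_3 := @Ordinal 3 2 isT.

Lemma ord3_cases (i : 'I_3) : [\/ i = o0, i = o1 | i = o2].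
Proof.
by case: i => [[|[|[|//]]] ?]; [constructor 1 | constructor 2 | constructor 3]; apply: val_inj.
Qed.

Lemma derangement3_even (s : {perm 'I_3}) : (forall i, s i != i) -> odd_perm s = false.
Proof.
move=> s_der; have s_inj i j : s i = s j -> i = j by apply: perm_inj.
suff [->|->] : s = (tperm o0 o1 * tperm o1 o2)%g \/ s = (tperm o1 o2 * tperm o0 o1)%g
  by rewrite odd_permM !odd_tperm.
have [e0|e0|e0] := ord3_cases (s o0); have [e1|e1|e1] := ord3_cases (s o1);
  have [e2|e2|e2] := ord3_cases (s o2);
  try by [move: (s_der o0); rewrite e0 | move: (s_der o1); rewrite e1 | move: (s_der o2); rewrite e2
         | have := s_inj o0 o1; rewrite e0 e1 => /(_ erefl)
         | have := s_inj o0 o2; rewrite e0 e2 => /(_ erefl)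
         | have := s_inj o1 o2; rewrite e1 e2 => /(_ erefl)].
  by right; apply/permP => i; case: (ord3_cases i) => ->; rewrite permM !permE /= ?e0 ?e1 ?e2.
by left; apply/permP => i; case: (ord3_cases i) => ->; rewrite permM !permE /= ?e0 ?e1 ?e2.
Qed.

Lemma odd_perm_apart3 (s t : {perm 'I_3}) : (forall i, s i != t i) -> odd_perm s = odd_perm t.
Proof.
move=> st; have: odd_perm (t * s^-1)%g = false.
  by apply: derangement3_even => i; rewrite permM (can2_eq (permKV s) (permK s)) eq_sym.
by rewrite odd_permM odd_permV; case: (odd_perm s); case: (odd_perm t).
Qed.

(** * Packings of subdivisions *)

Lemma set_enumeration (C : finType) (A : {set C}) k : #|A| = k ->
  exists f : 'I_k -> C,
    [/\ injective f, forall i, f i \in A & forall x, x \in A -> exists i, f i = x].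
Proof.
move<-; exists enum_val; split; [exact: enum_val_inj | exact: enum_valP |].
by move=> x xA; exists (enum_rank_in xA x); rewrite enum_rankK_in.
Qed.

Lemma sorted_enumeration N (A : {set 'I_N}) k : #|A| = k ->
  exists f : 'I_k -> 'I_N, (forall i, f i \in A) /\ {mono f : i j / i < j}.
Proof.
move<-; have sorted_A : sorted ltn (map val (enum A)).
  rewrite -[enum _](eq_filter (mem_enum _)) -(eq_filter (mem_map val_inj _)) -filter_map.
  by rewrite (sorted_filter ltn_trans) // unlock val_ord_enum iota_ltn_sorted.
have homo_f : {homo @enum_val _ (mem A) : i j / i < j}.
  move=> i j ij; have x0 := enum_val i.
  rewrite !(enum_val_nth x0) -!(nth_map x0 0) -?cardE ?ltn_ord //.
  by apply: (sorted_ltn_nth ltn_trans) => //; rewrite inE size_map -cardE ltn_ord.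
exists enum_val; split=> [|i j]; first exact: enum_valP.
apply/idP/idP => [|/homo_f //]; apply: contraTT; rewrite -!leqNgt leq_eqVlt.
by case/orP => [/eqP/val_inj -> // | /homo_f/ltnW].
Qed.

Definition matching_map (C : finType) (h : rel C) k (l f : 'I_k -> C) (i : 'I_k) :=
  [pick j | h (l i) (f j)].

Section CoverMatching.
Variables (V : finType) (g : rel V) (C : finType) (h : rel C) (L : V -> {set C}).
Hypothesis coverL : is_cover g h L.
Variables (k : nat) (u v : V) (l f : 'I_k -> C).
Hypotheses (guv : g u v) (gvu : g v u) (l_inj : injective l) (f_inj : injective f).
Hypotheses (lL : forall i, l i \in L u) (fL : forall j, f j \in L v).

Lemma matching_mapP i j : h (l i) (f j) = (matching_map h l f i == Some j).
Proof.
rewrite /matching_map; case: pickP => [j' hj'|-> //]; apply/idP/eqP => [hj|[<-] //].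
by congr Some; apply: f_inj; case: coverL => _ _ _ _ /(_ u v (l i)); apply.
Qed.

Lemma matching_map_partial_injective : partial_injective (matching_map h l f).
Proof.
move=> i1 i2 j /eqP; rewrite -matching_mapP (cover_sym coverL) => h1 /eqP.
rewrite -matching_mapP (cover_sym coverL) => h2.
by apply: l_inj; case: coverL => _ _ _ _ /(_ v u (f j)); apply.
Qed.

End CoverMatching.

Section Subdivision.
Variables (V0 : finType) (e0 : rel V0).
Local Notation V := (subdiv_vert e0).
Local Notation E := (subdiv_edge e0).
Local Notation G := (subdiv_rel e0).

Lemma subdiv_simple : simple_graph G.
Proof. by split; [case=> [a|s] [b|t] | case]. Qed.

Lemma subdiv_edge_ends (s : E) : exists uv : V0 * V0, val s = [set uv.1; uv.2].
Proof. by case: s => S /= /existsP [u /existsP [v /andP [_ /eqP ->]]]; exists (u, v). Qed.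

Lemma subdiv_edge_ends_neq u v (s : E) :
  simple_graph e0 -> val s = [set u; v] -> u != v.
Proof.
case: s => S /= /existsP [a /existsP [b /andP [e0ab /eqP ->]]] [_ e0_irr] ab_uv.
apply: contraTneq e0ab => uv; move: ab_uv; rewrite uv setUid => /setP ab_v.
move: (ab_v a) (ab_v b); rewrite !inE !eqxx orbT /= => /esym/eqP -> /esym/eqP ->.
by rewrite e0_irr.
Qed.

Lemma subdiv_packing_of_avoiding k (C : finType) (h : rel C) (L : V -> {set C})
    (l : V -> 'I_k -> C) :
  is_cover G h L -> (forall x, injective (l x)) -> (forall x i, l x i \in L x) ->
  (forall (s : E) u v, val s = [set u; v] ->
     has_avoiding_perm (matching_map h (l (inl u)) (l (inr s)))
                       (matching_map h (l (inl v)) (l (inr s)))) ->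
  has_packing h L k.
Proof.
move=> coverL l_inj lL avoid.
have [uv suv] := fin_all_exists subdiv_edge_ends.
have [sg /all_and2 [sg_inj sg_avoid]] := fin_all_exists (fun s => avoid s _ _ (suv s)).
have l_match a (s : E) i j : a \in val s ->
    h (l (inl a) i) (l (inr s) j) = (matching_map h (l (inl a)) (l (inr s)) i == Some j).
  by move=> a_s; apply: (matching_mapP coverL) => //; exact: a_s.
have l_indep a (s : E) i : a \in val s -> ~~ h (l (inl a) i) (l (inr s) (sg s i)).
  move=> a_s; rewrite l_match //; move: a_s; rewrite suv !inE.
  by case/orP => /eqP ->; have [] := sg_avoid s i.
pose phi i (x : V) := if x is inr s then l x (sg s i) else l x i.
apply: (has_packing_of_choices coverL (phi := phi)) => [i [a|s]|i|i j [a|s] /=]; try exact: lL.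
- case=> [a|s] [b|t] //= adj; rewrite /phi; last rewrite (cover_sym coverL); exact: l_indep.
- exact: l_inj.
- by move/l_inj/sg_inj.
Qed.

Lemma subdiv_corr_packing4 : corr_packing_prop G 4.
Proof.
move=> C h L coverL L4.
have [l /all_and3 [l_inj lL _]] := fin_all_exists (fun x => set_enumeration (L4 x)).
apply: (subdiv_packing_of_avoiding coverL l_inj lL) => s u v suv.
have pinj a : a \in val s -> partial_injective (matching_map h (l (inl a)) (l (inr s))).
  move=> a_s.
  by apply: (matching_map_partial_injective (u := inl a) (v := inr s) coverL a_s a_s); rewrite ?lL.
by apply: partial_injective_avoidable4; apply: pinj; rewrite suv !inE eqxx ?orbT.
Qed.

Lemma subdiv_list_packing3 : list_packing_prop G 3.
Proof.
move=> N Lst L3; have coverL := lc_cover Lst subdiv_simple.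
have [col /all_and2 [colL col_mono]] := fin_all_exists (fun x => sorted_enumeration (L3 x)).
pose l x i : lc_vert Lst := Sub (x, col x i) (colL x i).
have l_inj x : injective (l x).
  move=> i j /(congr1 (fun c => (val c).2)) /= e; apply/val_inj/eqP.
  by have := col_mono x i j; have := col_mono x j i; rewrite e ltnn; case: ltngtP.
have lL x i : l x i \in lc_L Lst x by rewrite inE.
apply: (subdiv_packing_of_avoiding coverL l_inj lL) => s u v suv.
have mono a : a \in val s -> monotone_partial (matching_map (lc_rel G Lst) (l (inl a)) (l (inr s))).
  move=> a_s i j x y ij /eqP bi /eqP bj.
  have match_col i' x' :
      lc_rel G Lst (l (inl a) i') (l (inr s) x') -> col (inl a) i' = col (inr s) x'.
    by rewrite /lc_rel /= a_s => /eqP.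
  move: bi bj; rewrite -!(matching_mapP (u := inl a) (v := inr s) coverL) ?lL //.
  by move=> /match_col ci /match_col cj; rewrite -(col_mono (inr s)) -ci -cj col_mono.
by apply: monotone_avoidable3; apply: mono; rewrite suv !inE eqxx ?orbT.
Qed.

End Subdivision.

(** * Fractional packings of subdivisions *)

Local Open Scope ring_scope.

Section ProductSums.
Variables (R : comPzSemiRingType) (I J : finType) (F : I -> J -> R).

Lemma sum_ffun_prod_restricted (P : I -> pred J) :
  \sum_(al : {ffun I -> J} | [forall x, P x (al x)]) \prod_x F x (al x) =
  \prod_x \sum_(j | P x j) F x j.
Proof.
under [RHS]eq_bigr do rewrite big_mkcond.
rewrite big_mkcond bigA_distr_bigA; apply: eq_bigr => al _ /=.
case: (boolP [forall x, _]) => [/forallP Pal | /forallPn [x nPx]].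
  by apply: eq_bigr => x _; rewrite Pal.
by rewrite (bigD1 x) //= (negbTE nPx) mul0r.
Qed.

Lemma sum_ffun_prod_mul1 (a : I) (G : J -> R) :
  (forall x, x != a -> \sum_j F x j = 1) ->
  \sum_(al : {ffun I -> J}) (\prod_x F x (al x)) * G (al a) = \sum_j F a j * G j.
Proof.
move=> F1; rewrite (partition_big (fun al : {ffun I -> J} => al a) xpredT) //=.
apply: eq_bigr => j _; under eq_bigr => al /eqP -> do rewrite mulrC.
rewrite -mulr_sumr mulrC; congr (_ * _).
rewrite (eq_bigl (fun al : {ffun I -> J} => [forall x, (x == a) ==> (al x == j)])).
  rewrite (sum_ffun_prod_restricted (fun x k => (x == a) ==> (k == j))).
  rewrite (bigD1 a) //= eqxx big_pred1_eq [X in _ * X]big1 ?mulr1 // => x xa.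
  by rewrite (negbTE xa); apply: F1.
move=> al; apply/eqP/forallP => [<- x|/(_ a)]; last by rewrite eqxx => /eqP.
by apply/implyP => /eqP ->.
Qed.

Lemma sum_ffun_prod_mul2 (a b : I) (G : J -> J -> R) : a != b ->
  (forall x, x != a -> x != b -> \sum_j F x j = 1) ->
  \sum_(al : {ffun I -> J}) (\prod_x F x (al x)) * G (al a) (al b) =
  \sum_ja \sum_jb F a ja * F b jb * G ja jb.
Proof.
move=> ab F1; rewrite (partition_big (fun al : {ffun I -> J} => (al a, al b)) xpredT) //=.
rewrite pair_bigA; apply: eq_bigr => -[ja jb] _ /=.
under eq_bigr => al /eqP [-> ->] do rewrite mulrC.
rewrite -mulr_sumr mulrC; congr (_ * _).
pose P x k := ((x == a) ==> (k == ja)) && ((x == b) ==> (k == jb)).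
rewrite (eq_bigl (fun al : {ffun I -> J} => [forall x, P x (al x)])).
  rewrite (sum_ffun_prod_restricted P) /P.
  rewrite (bigD1 a) // (bigD1 b) 1?eq_sym //= !eqxx [b == a]eq_sym (negbTE ab) /=.
  rewrite (big_pred1 ja) => [|j /=]; last by rewrite andbT.
  rewrite big_pred1_eq [X in _ * (_ * X)]big1 ?mulr1 // => x /andP [xa xb].
  by rewrite (negbTE xa) (negbTE xb); apply: F1.
move=> al; rewrite /P; apply/eqP/forallP => [[<- <-] x|ab_al].
  by apply/andP; split; apply/implyP => /eqP ->.
by move: (ab_al a) (ab_al b); rewrite !eqxx (eq_sym b) (negbTE ab) /= andbT => /eqP -> /eqP ->.
Qed.

End ProductSums.

Local Notation R := Rdefinitions.R.

Definition avoid_weight (y1 y2 j : 'I_3) : R :=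
  if y1 == y2 then (if j == y1 then 0 else 2^-1)
  else (if (j == y1) || (j == y2) then 0 else 1).

Definition third : R := 3%:R^-1.

Lemma sum_ord3 (F : 'I_3 -> R) : \sum_j F j = F o0 + F o1 + F o2.
Proof.
by rewrite !big_ord_recr big_ord0 /= (@add0r R); congr (F _ + F _ + F _); apply: val_inj.
Qed.

Lemma avoid_weight_ge0 y1 y2 j : 0 <= avoid_weight y1 y2 j.
Proof. by rewrite /avoid_weight; repeat case: ifP => _; rewrite ?invr_ge0 ?ler0n. Qed.

Lemma avoid_weight_sum y1 y2 : \sum_j avoid_weight y1 y2 j = 1.
Proof.
rewrite sum_ord3 /avoid_weight.
by case: (ord3_cases y1) => ->; case: (ord3_cases y2) => -> /=; field.
Qed.

Lemma avoid_weight_marginal j : \sum_y1 \sum_y2 avoid_weight y1 y2 j = 3%:R.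
Proof. by rewrite !sum_ord3 /avoid_weight; case: (ord3_cases j) => -> /=; field. Qed.

Lemma avoid_weight_eq0 y1 y2 j : (avoid_weight y1 y2 j == 0) = (j == y1) || (j == y2).
Proof.
rewrite /avoid_weight; have [->|_] := eqVneq y1 y2; case: ifP => jy;
  by rewrite ?orbb ?jy ?eqxx ?invr_eq0 ?oner_eq0 ?pnatr_eq0.
Qed.

Lemma third_ge0 : 0 <= third.
Proof. by rewrite invr_ge0 ler0n. Qed.

Lemma sum_third : \sum_(j : 'I_3) third = 1.
Proof. by rewrite sumr_const card_ord -mulr_natl /third; field. Qed.

Lemma sum_ffun_prod_third (I : finType) : \sum_(al : {ffun I -> 'I_3}) \prod_(x : I) third = 1.
Proof. by rewrite -(bigA_distr_bigA (fun _ _ => third)) big1 // => x _; apply: sum_third. Qed.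

Lemma sum_pushforward (A B T : finType) (P : pred T) (tr : A -> B -> T) (w : A -> B -> R) :
  \sum_(t | P t) \sum_a \sum_b (if tr a b == t then w a b else 0) =
  \sum_a \sum_b (if P (tr a b) then w a b else 0).
Proof.
rewrite exchange_big; apply: eq_bigr => a _; rewrite exchange_big; apply: eq_bigr => b _.
case: ifP => [Ptr|nPtr].
  rewrite (bigD1 (tr a b)) //= eqxx big1 ?addr0 // => t /andP [_].
  by rewrite eq_sym => /negbTE ->.
by rewrite big1 // => t Pt; case: eqP => // trt; rewrite trt Pt in nPtr.
Qed.

Section FracPacking.
Variables (V0 : finType) (e0 : rel V0) (C : finType) (h : rel C).
Local Notation V := (subdiv_vert e0).
Local Notation E := (subdiv_edge e0).
Variable L : V -> {set C}.
Hypotheses (coverL : is_cover (subdiv_rel e0) h L) (L3 : k_fold L 3).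
Variables (l : V -> 'I_3 -> C) (u v : E -> V0) (m1 m2 : E -> 'I_3 -> 'I_3).
Hypotheses (l_inj : forall x, injective (l x)) (lL : forall x i, l x i \in L x).
Hypothesis l_onto : forall x c, c \in L x -> exists i, l x i = c.
Hypotheses (uv_neq : forall s, u s != v s)
  (mem_ends : forall (s : E) a, (a \in val s) = (a == u s) || (a == v s)).
Hypotheses (m1_inj : forall s, injective (m1 s)) (m2_inj : forall s, injective (m2 s)).
Hypotheses (m1_match : forall s i j, h (l (inl (u s)) i) (l (inr s) j) -> j = m1 s i)
  (m2_match : forall s i j, h (l (inl (v s)) i) (l (inr s) j) -> j = m2 s i).

Definition colouring (al : {ffun V0 -> 'I_3}) (be : {ffun E -> 'I_3}) (x : V) :=
  match x with inl a => al a | inr s => be s end.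

Definition edge_weight (al : {ffun V0 -> 'I_3}) (s : E) :=
  avoid_weight (m1 s (al (u s))) (m2 s (al (v s))).

Definition weight (al : {ffun V0 -> 'I_3}) (be : {ffun E -> 'I_3}) :=
  \prod_(a : V0) third * \prod_(s : E) edge_weight al s (be s).

Definition transversal_of (al : {ffun V0 -> 'I_3}) (be : {ffun E -> 'I_3}) :=
  [set l x (colouring al be x) | x : V].

Definition frac_dist (I : {set C}) :=
  \sum_(al : {ffun V0 -> 'I_3}) \sum_(be : {ffun E -> 'I_3})
    (if transversal_of al be == I then weight al be else 0).

Lemma weight_ge0 al be : 0 <= weight al be.
Proof. by apply: mulr_ge0; apply: prodr_ge0 => ? _; rewrite ?third_ge0 ?avoid_weight_ge0. Qed.

Lemma weight_indep al be : weight al be != 0 -> indep_transversal h L (transversal_of al be).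
Proof.
rewrite /weight mulf_eq0 negb_or => /andP [_ /prodf_neq0 w_neq0].
have be_ok s : ~~ ((be s == m1 s (al (u s))) || (be s == m2 s (al (v s)))).
  by have := w_neq0 s isT; rewrite avoid_weight_eq0.
have indep a (s : E) : a \in val s -> ~~ h (l (inl a) (al a)) (l (inr s) (be s)).
  rewrite mem_ends => /orP [] /eqP ->; apply: contra (be_ok s) => /[dup].
    by move/m1_match => ->; rewrite eqxx.
  by move/m2_match => ->; rewrite eqxx orbT.
apply: (indep_transversal_imset coverL) => [x|[a|s] [b|t] //= adj]; first exact: lL.
  exact: indep.
by rewrite (cover_sym coverL); apply: indep.
Qed.

Lemma sum_edge_weight al s : \sum_j edge_weight al s j = 1.
Proof. exact: avoid_weight_sum. Qed.

Lemma sum_weight al : \sum_be weight al be = \prod_(a : V0) third.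
Proof.
rewrite -mulr_sumr -(bigA_distr_bigA (edge_weight al)) [X in _ * X]big1 ?mulr1 // => s _.
exact: sum_edge_weight.
Qed.

Lemma mem_transversal_of x i al be :
  (l x i \in transversal_of al be) = (colouring al be x == i).
Proof.
apply/imsetP/eqP => [[y _ lxy]|<-]; last by exists x.
have xy : x = y by apply: (cover_owner_uniq coverL (lL x i)); rewrite lxy lL.
by move: lxy; rewrite -xy => /l_inj.
Qed.

Lemma frac_dist_marginal_vertex a i :
  \sum_(al : {ffun V0 -> 'I_3}) \sum_(be : {ffun E -> 'I_3})
     (if al a == i then weight al be else 0) = third.
Proof.
transitivity (\sum_(al : {ffun V0 -> 'I_3}) (\prod_(x : V0) third) * (al a == i)%:R).
  apply: eq_bigr => al _; rewrite mulr_natr mulrb.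
  by case: eqP => _; [apply: sum_weight | apply: big1].
have /= -> := sum_ffun_prod_mul1 (F := fun _ _ => third) (fun j => (j == i)%:R)
  (fun x _ => sum_third).
by rewrite (bigD1 i) //= eqxx mulr1 big1 ?addr0 // => j /negbTE ->; rewrite mulr0.
Qed.

Lemma frac_dist_marginal_edge s j :
  \sum_(al : {ffun V0 -> 'I_3}) \sum_(be : {ffun E -> 'I_3})
     (if be s == j then weight al be else 0) = third.
Proof.
transitivity (\sum_(al : {ffun V0 -> 'I_3})
    (\prod_(x : V0) third) * edge_weight al s j).
  apply: eq_bigr => al _.
  have := sum_ffun_prod_mul1 (F := edge_weight al) (a := s) (fun k => (k == j)%:R)
    (fun t _ => sum_edge_weight al t).
  rewrite /= (bigD1 j) //= eqxx mulr1 [X in _ + X]big1 ?addr0 => [|k /negbTE ->];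
    last by rewrite mulr0.
  move=> <-; rewrite mulr_sumr; apply: eq_bigr => be _.
  by rewrite mulr_natr mulrb /weight; case: eqP => _; rewrite ?mulr0.
rewrite /edge_weight; have /= -> := sum_ffun_prod_mul2 (F := fun _ _ => third)
  (fun i1 i2 => avoid_weight (m1 s i1) (m2 s i2) j) (uv_neq s) (fun x _ _ => sum_third).
under eq_bigr => i1 _ do rewrite -mulr_sumr.
rewrite -mulr_sumr.
have -> : \sum_i1 \sum_i2 avoid_weight (m1 s i1) (m2 s i2) j = 3%:R.
  rewrite -(avoid_weight_marginal j) [RHS](reindex_inj (@m1_inj s)); apply: eq_bigr => i1 _.
  by rewrite [RHS](reindex_inj (@m2_inj s)).
by rewrite /third; field.
Qed.

Lemma frac_dist_packing : has_fractional_packing h L.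
Proof.
exists frac_dist; split.
- move=> I; apply: sumr_ge0 => al _; apply: sumr_ge0 => be _.
  by case: ifP => _; rewrite ?weight_ge0.
- move=> I nI; apply: big1 => al _; apply: big1 => be _; case: eqP => // tI.
  by apply/eqP; apply: contraR nI; rewrite -tI; apply: weight_indep.
- rewrite (sum_pushforward xpredT) /=.
  by under eq_bigr => al _ do rewrite sum_weight; apply: sum_ffun_prod_third.
move=> x c cL; rewrite /frac_dist (sum_pushforward (fun I : {set C} => c \in I)) L3.
have [i <-] := l_onto cL.
under eq_bigr => al _ do under eq_bigr => be _ do rewrite mem_transversal_of.
by case: x {cL} => [a|s] /=; rewrite ?frac_dist_marginal_vertex ?frac_dist_marginal_edge.
Qed.

End FracPacking.

Lemma subdiv_corr_frac3 (V0 : finType) (e0 : rel V0) :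
  simple_graph e0 -> corr_frac_prop (subdiv_rel e0) 3.
Proof.
move=> e0_simple C h L coverL L3.
have [l /all_and3 [l_inj lL l_onto]] := fin_all_exists (fun x => set_enumeration (L3 x)).
have [uv suv] := fin_all_exists (@subdiv_edge_ends _ e0).
have uv_neq s : (uv s).1 != (uv s).2 := subdiv_edge_ends_neq e0_simple (suv s).
have mem_ends (s : subdiv_edge e0) a : (a \in val s) = (a == (uv s).1) || (a == (uv s).2).
  by rewrite suv !inE.
have matching a (s : subdiv_edge e0) : a \in val s -> exists m : 'I_3 -> 'I_3,
    injective m /\ forall i j, h (l (inl a) i) (l (inr s) j) -> j = m i.
  move=> a_s; have [m [m_inj m_ext]] := partial_injective_extend
    (matching_map_partial_injective (u := inl a) (v := inr s) coverL a_s a_s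
      (l_inj _) (l_inj _) (lL _) (lL _)).
  exists m; split=> // i j.
  by rewrite (matching_mapP (u := inl a) (v := inr s) coverL) ?lL // => /eqP /m_ext.
have end1 s : (uv s).1 \in val s by rewrite mem_ends eqxx.
have end2 s : (uv s).2 \in val s by rewrite mem_ends eqxx orbT.
have [m1 /all_and2 [m1_inj m1_match]] := fin_all_exists (fun s => matching _ s (end1 s)).
have [m2 /all_and2 [m2_inj m2_match]] := fin_all_exists (fun s => matching _ s (end2 s)).
exact: (frac_dist_packing coverL L3 l_inj lL l_onto uv_neq mem_ends m1_inj m2_inj
  m1_match m2_match).
Qed.

Local Close Scope ring_scope.

(** * The subdivided triangle *)

Section FibreCover.
Variables (V : finType) (k : nat).

Definition fibre (v : V) : {set V * 'I_k} := [set x | x.1 == v].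

Lemma fibre_k_fold : k_fold fibre k.
Proof.
move=> v; have pair_inj : injective (pair v : 'I_k -> V * 'I_k) by move=> i j [].
rewrite -[RHS]card_ord -(card_imset _ pair_inj); apply: eq_card => -[w i].
by rewrite !inE; apply/eqP/imsetP => [/= <-|[j _ [-> _]]]; first by exists i.
Qed.

Lemma packing_fibre_perms (h : rel (V * 'I_k)) : has_packing h fibre k ->
  exists p : V -> {perm 'I_k}, forall i v w, ~~ h (v, p v i) (w, p w i).
Proof.
case=> T [T_indep T_disj].
have [y Ty] := fin_all_exists (fun vi : V * 'I_k => indep_transversal_meet1 vi.1 (T_indep vi.2)).
have yT v i : y (v, i) \in T i /\ y (v, i) = (v, (y (v, i)).2).
  move: (set11 (y (v, i))); rewrite -Ty !inE /= => /andP [yT /eqP yv].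
  by split=> //; case: (y (v, i)) yv => a b /= ->.
have q_inj v : injective (fun i => (y (v, i)).2).
  move=> i j /= qij; apply/eqP; apply: contraT => nij.
  have yij : y (v, i) = y (v, j) by rewrite (yT v i).2 (yT v j).2 qij.
  by move: (disjointFr (T_disj _ _ nij) (yT v i).1); rewrite yij (yT v j).1.
exists (fun v => perm (q_inj v)) => i v w; rewrite !permE.
have [[Tv <-] [Tw <-]] := (yT v i, yT w i).
by case/andP: (T_indep i) => /forallP /(_ _) /implyP /(_ Tv) /forallP /(_ _) /implyP /(_ Tw).
Qed.

End FibreCover.

Lemma cycle3_simple : simple_graph (cycle_rel 3).
Proof. by split=> [i j|i]; rewrite /cycle_rel; [rewrite orbC | case: (ord3_cases i) => ->]. Qed.

Local Notation G3 := (subdiv_rel (cycle_rel 3)).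
Local Notation E3 := (subdiv_edge (cycle_rel 3)).
Local Notation V3 := (subdiv_vert (cycle_rel 3)).

Definition cycle3_edge (a b : 'I_3) (ab : cycle_rel 3 a b) : E3.
Proof.
by exists [set a; b]; apply/existsP; exists a; apply/existsP; exists b; rewrite ab eqxx.
Defined.

Definition e01 := @cycle3_edge o0 o1 isT.
Definition e12 := @cycle3_edge o1 o2 isT.
Definition e20 := @cycle3_edge o2 o0 isT.

Section PermCover.
Variables (V : finType) (g : rel V) (k : nat) (pi : V -> V -> {perm 'I_k}).
Hypotheses (g_simple : simple_graph g) (pi_sym : forall v w, pi w v = (pi v w)^-1%g).

Definition perm_cover_rel (x y : V * 'I_k) :=
  (x != y) && ((x.1 == y.1) || g x.1 y.1 && (y.2 == pi x.1 y.1 x.2)).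

Lemma perm_cover : is_cover g perm_cover_rel (@fibre V k).
Proof.
have [g_sym g_irr] := g_simple.
have pi_eq v w i j : (j == pi v w i) = (i == pi w v j).
  by rewrite pi_sym eq_sym (can2_eq (permKV _) (permK _)).
split.
- split=> [x y|x]; last by rewrite /perm_cover_rel eqxx.
  by rewrite /perm_cover_rel eq_sym [y.1 == _]eq_sym g_sym pi_eq.
- by move=> x; apply/eqP/cards1P; exists x.1; apply/setP => v; rewrite !inE eq_sym.
- by move=> v x y; rewrite !inE /perm_cover_rel => /eqP -> /eqP -> ->; rewrite eqxx.
- move=> u v x y uv nguv; rewrite !inE /perm_cover_rel => /eqP -> /eqP ->.
  by rewrite (negbTE uv) (negbTE nguv) andbF.
move=> u v x y1 y2 guv; rewrite !inE /perm_cover_rel => /eqP xu /eqP y1v /eqP y2v.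
have nuv : (u == v) = false by apply: contraTF guv => /eqP ->; rewrite g_irr.
rewrite xu y1v y2v nuv guv /= => /andP [_ /eqP y1x] /andP [_ /eqP y2x].
by rewrite [y1]surjective_pairing [y2]surjective_pairing y1v y2v y1x y2x.
Qed.

Lemma perm_cover_packing : has_packing perm_cover_rel (@fibre V k) k ->
  exists p : V -> {perm 'I_k}, forall i v w, g v w -> p w i != pi v w (p v i).
Proof.
case/packing_fibre_perms => p p_indep; exists p => i v w gvw.
have nvw : v != w by apply: contraTneq gvw => ->; case: g_simple => _ ->.
have := p_indep i v w; rewrite /perm_cover_rel /= (negbTE nvw) gvw /=.
by rewrite xpair_eqE (negbTE nvw).
Qed.

End PermCover.

Lemma subdiv_cycle3_adj :
  [/\ G3 (inl o0) (inr e01) /\ G3 (inl o1) (inr e01),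
      G3 (inl o1) (inr e12) /\ G3 (inl o2) (inr e12)
    & G3 (inl o2) (inr e20) /\ G3 (inl o0) (inr e20)].
Proof. by rewrite /= !inE !eqxx ?orbT. Qed.

Lemma cycle3_edge_neq : (inr e01 != inr e20 :> V3) && (inr e12 != inr e20 :> V3).
Proof.
pose o1_in (x : V3) := if x is inr s then o1 \in val s else false.
by apply/andP; split; apply/eqP => /(congr1 o1_in); rewrite /o1_in /= !inE.
Qed.

(* The matchings of the twisted cover: the identity on every edge but one. *)
Definition twist (v w : V3) : {perm 'I_3} :=
  if [|| (v == inl o0) && (w == inr e20) | (w == inl o0) && (v == inr e20)]
  then tperm o1 o2 else 1%g.

Lemma twist_sym v w : twist w v = (twist v w)^-1%g.
Proof. by rewrite /twist orbC; case: ifP; rewrite ?tpermV ?invg1. Qed.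

Lemma subdiv_cycle3_no_corr_packing3 : ~ corr_packing_prop G3 3.
Proof.
have cover := perm_cover (subdiv_simple (cycle_rel 3)) twist_sym.
move=> /(_ _ _ _ cover (@fibre_k_fold V3 3)) /(perm_cover_packing (subdiv_simple _)) [p p_apart].
have parity v w : G3 v w -> odd_perm (p w) = odd_perm (p v * twist v w)%g.
  move=> gvw; apply: odd_perm_apart3 => i; rewrite permM; exact: p_apart.
have [ne01 ne12] := andP cycle3_edge_neq.
have untwisted a (s : E3) :
    (inl a != inl o0 :> V3) || (inr s != inr e20 :> V3) -> twist (inl a) (inr s) = 1%g.
  by case/orP => /negbTE ne; rewrite /twist ne ?andbF.
have [[g0 g1] [g1' g2] [g2' g0']] := subdiv_cycle3_adj.
move: (parity _ _ g0) (parity _ _ g1) (parity _ _ g1') (parity _ _ g2) (parity _ _ g2')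
  (parity _ _ g0').
rewrite (untwisted o0 e01) ?ne01 ?orbT // (untwisted o1 e01) // (untwisted o1 e12) //.
rewrite (untwisted o2 e12) // (untwisted o2 e20) // /twist !eqxx !mulg1 odd_permM odd_tperm.
by move=> -> <- -> <- ->; case: (odd_perm _).
Qed.

Section ListTransversal.
Variables (V : finType) (g : rel V) (N : nat) (Lst : V -> {set 'I_N}).
Hypothesis g_simple : simple_graph g.
Variable I : {set lc_vert Lst}.
Hypothesis I_indep : indep_transversal (lc_rel g Lst) (lc_L Lst) I.

Lemma lc_transversal_pick w : exists2 d, d \in I & (val d).1 = w.
Proof.
have [d Id] := indep_transversal_meet1 w I_indep.
by move: (set11 d); rewrite -Id !inE => /andP [dI /eqP dw]; exists d.
Qed.

Lemma lc_transversal_proper c d : c \in I -> d \in I ->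
  g (val c).1 (val d).1 -> (val c).2 != (val d).2.
Proof.
case/andP: I_indep => /forallP /(_ c) /implyP indep _ cI dI gcd.
move: (indep cI) => /forallP /(_ d) /implyP /(_ dI); apply: contra => /eqP cd.
rewrite /lc_rel cd eqxx gcd orbT andbT; apply: contraTneq gcd => ->.
by case: g_simple => _ ->.
Qed.

Lemma lc_transversal_forced c v w a b : c \in I -> val c = (v, a) -> g v w ->
  Lst w = [set a; b] -> exists2 d, d \in I & val d = (w, b).
Proof.
move=> cI cva gvw Lw; have [d dI dw] := lc_transversal_pick w.
have gcw : g (val c).1 w by rewrite cva.
have ca : (val c).2 = a by rewrite cva.
exists d => //; rewrite [val d]surjective_pairing dw; congr (_, _).
have := valP d; rewrite dw Lw !inE => /orP [/eqP da|/eqP //].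
by have := lc_transversal_proper cI dI; rewrite dw ca da eqxx => /(_ gcw).
Qed.

End ListTransversal.

Definition col7 (n : nat) : 'I_7 := inZp n.

(* Colour [1] at [o0] forces colours [3, 4, 5, 6, 1] along the path [e01, o1, e12, o2, e20]. *)
Definition forcing_lists (x : V3) : {set 'I_7} :=
  match x with
  | inl a => if a == o0 then [set col7 1; col7 2]
             else if a == o1 then [set col7 3; col7 4] else [set col7 5; col7 6]
  | inr s => if o2 \notin val s then [set col7 1; col7 3]
             else if o0 \notin val s then [set col7 4; col7 5] else [set col7 6; col7 1]
  end.

Lemma card_forcing_lists x : #|forcing_lists x| = 2.
Proof. by case: x => [a|s] /=; repeat case: ifP => _; rewrite cards2. Qed.

Lemma forcing_lists_edges :
  [/\ forcing_lists (inr e01) = [set col7 1; col7 3],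
      forcing_lists (inr e12) = [set col7 4; col7 5]
    & forcing_lists (inr e20) = [set col7 6; col7 1]].
Proof. by split; rewrite /= !inE. Qed.

Lemma forcing_lists_avoided (I : {set lc_vert forcing_lists}) c :
  indep_transversal (lc_rel G3 forcing_lists) (lc_L forcing_lists) I ->
  val c = (inl o0 : V3, col7 1) -> c \notin I.
Proof.
move=> I_indep cv; apply/negP => cI; have G3_simple := subdiv_simple (cycle_rel 3).
have [[g0 g1] [g1' g2] [g2' g0']] := subdiv_cycle3_adj.
have [L01 L12 L20] := forcing_lists_edges.
have [d1 d1I d1v] := lc_transversal_forced G3_simple I_indep cI cv g0 L01.
have [d2 d2I d2v] := lc_transversal_forced G3_simple I_indep d1I d1v (w := inl o1) g1 (erefl _).
have [d3 d3I d3v] := lc_transversal_forced G3_simple I_indep d2I d2v g1' L12.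
have [d4 d4I d4v] := lc_transversal_forced G3_simple I_indep d3I d3v (w := inl o2) g2 (erefl _).
have [d5 d5I d5v] := lc_transversal_forced G3_simple I_indep d4I d4v g2' L20.
by have := lc_transversal_proper G3_simple I_indep cI d5I; rewrite cv d5v => /(_ g0').
Qed.

Definition unit_lists (x : V3) : {set 'I_1} := [set ord0].

Lemma unit_lists_no_transversal (I : {set lc_vert unit_lists}) :
  ~ indep_transversal (lc_rel G3 unit_lists) (lc_L unit_lists) I.
Proof.
move=> I_indep; have G3_simple := subdiv_simple (cycle_rel 3).
have [c cI cv] := lc_transversal_pick I_indep (inl o0).
have [d dI dv] := lc_transversal_pick I_indep (inr e01).
have := lc_transversal_proper G3_simple I_indep cI dI; rewrite cv dv.
by case: subdiv_cycle3_adj => -[g0 _] _ _ /(_ g0); rewrite !ord1.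
Qed.

Definition unit_lists_vertex : lc_vert unit_lists := exist _ (inl o0, ord0) (set11 ord0).

Definition forcing_lists_vertex : lc_vert forcing_lists := exist _ (inl o0, col7 1) (setU11 _ _).

Lemma subdiv_cycle3_no_list_frac k : (0 < k <= 2)%N -> ~ list_frac_prop G3 k.
Proof.
case: k => [|[|[|//]]] // _.
  move=> /(_ 1 unit_lists (fun _ => cards1 _)).
  apply: (not_fractional_packing_of_avoided (v := inl o0) (x := unit_lists_vertex)).
    by rewrite inE.
  by move=> I /unit_lists_no_transversal.
move=> /(_ 7 forcing_lists card_forcing_lists).
apply: (not_fractional_packing_of_avoided (v := inl o0) (x := forcing_lists_vertex)).
  by rewrite inE.
by move=> I /forcing_lists_avoided; apply.
Qed.

Lemma subdiv_cycle3_no_list_packing k : (0 < k <= 2)%N -> ~ list_packing_prop G3 k.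
Proof.
case: k => [|[|[|//]]] // _.
  move=> /(_ 1 unit_lists (fun _ => cards1 _)).
  apply: (not_packing_of_avoided (v := inl o0) (x := unit_lists_vertex)).
  - exact: lc_k_fold (fun _ => cards1 _).
  - by rewrite inE.
  - by move=> I /unit_lists_no_transversal.
move=> /(_ 7 forcing_lists card_forcing_lists).
apply: (not_packing_of_avoided (v := inl o0) (x := forcing_lists_vertex)).
- exact: lc_k_fold card_forcing_lists.
- by rewrite inE.
- by move=> I /forcing_lists_avoided; apply.
Qed.

Lemma not_chi_le (P : nat -> Prop) n : (forall k, (0 < k <= n)%N -> ~ P k) -> ~ chi_le P n.
Proof. by move=> noP [k [k_gt0 kn]]; apply: noP; rewrite k_gt0. Qed.

Theorem mainTheorem13 :
  (forall (V0 : finType) (e0 : rel V0), simple_graph e0 ->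
     let G := subdiv_rel e0 in
     [/\ chi_leq (list_frac_prop G) (corr_frac_prop G),
         chi_le (corr_frac_prop G) 3,
         chi_le (corr_packing_prop G) 4
       & chi_le (list_packing_prop G) 3]) /\
  [/\ (exists n, (3 <= n)%N /\ chi_eq (list_frac_prop (subdiv_rel (cycle_rel n))) 3),
      (exists n, (3 <= n)%N /\ chi_eq (corr_frac_prop (subdiv_rel (cycle_rel n))) 3),
      (exists n, (3 <= n)%N /\ chi_eq (corr_packing_prop (subdiv_rel (cycle_rel n))) 4)
    & (exists n, (3 <= n)%N /\ chi_eq (list_packing_prop (subdiv_rel (cycle_rel n))) 3)].
Proof.
split=> [V0 e0 e0_simple|].
  split; [exact: chi_leq_list_corr_frac (subdiv_simple e0)
         | exists 3; split=> //; exact: subdiv_corr_frac3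
         | exists 4; split=> //; exact: subdiv_corr_packing4
         | exists 3; split=> //; exact: subdiv_list_packing3].
have G3_simple := subdiv_simple (cycle_rel 3).
have corr_frac3 := subdiv_corr_frac3 cycle3_simple.
split; exists 3; (split; first by []); split.
- by exists 3; split=> //; apply: list_frac_of_corr_frac.
- exact/not_chi_le/subdiv_cycle3_no_list_frac.
- by exists 3.
- apply/not_chi_le => k /subdiv_cycle3_no_list_frac no_list.
  by move/(list_frac_of_corr_frac G3_simple).
- by exists 4; split=> //; apply: subdiv_corr_packing4.
- apply/not_chi_le => k /andP [k_gt0]; rewrite leq_eqVlt ltnS => /orP [/eqP -> |k2].
    exact: subdiv_cycle3_no_corr_packing3.
  move/(list_packing_of_corr_packing G3_simple).
  by apply: subdiv_cycle3_no_list_packing; rewrite k_gt0.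
- by exists 3; split=> //; apply: subdiv_list_packing3.
- exact/not_chi_le/subdiv_cycle3_no_list_packing.
Qed.
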